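(* For every integer $q>2$, $\mathrm{Inn}(Q_2(T_{2,q}\cup A))\cong D_{2q/\gcd(2,q)}$ and $\mathrm{Trans}(Q_2(T_{2,q}\cup A))\cong D_q$.
   Context: A quandle is a set $Q$ with binary operations $\rhd$, $\rhd^{-1}$ satisfying $x\rhd x=x$, $(x\rhd y)\rhd^{-1}y=x=(x\rhd^{-1}y)\rhd y$, and $(x\rhd y)\rhd z=(x\rhd z)\rhd(y\rhd z)$; write $x^y=x\rhd y$. For $x\in Q$ the point symmetry $S_x:Q\to Q$ is $S_x(y)=y\rhd x$. $\mathrm{Inn}(Q)$ is the subgroup of the automorphism group generated by all $S_x$, and $\mathrm{Trans}(Q)$ is the subgroup generated by all products $S_xS_y^{-1}$. A quandle is involutory if $(x^y)^y=x$ for all $x,y$. The fundamental quandle of a link is presented from a diagram by one generator per arc and a relation $x_i=x_k^{x_j}$ at each crossing (over-arc $x_j$); the involutory quandle $Q_2(L)$ is its quotient by the relations $x^{yy}=x$ for all pairs of generators, and it is independent of orientation. $T_{2,q}$ is the $(2,q)$ torus link (two strands with $q$ right-handed half twists) lying on an unknotted torus $F\subset S^3$; $T_{2,q}\cup A$ is obtained by adjoining an axis $A$, the core of the solid torus bounded by $F$ around which $T_{2,q}$ winds twice, so that $A$ has linking number $2$ with $T_{2,q}$. $D_m$ denotes the dihedral group of order $2m$. *)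

From mathcomp Require Import all_boot all_fingroup all_solvable.
Set Implicit Arguments. Unset Strict Implicit. Unset Printing Implicit Defensive.

Record quandle := Quandle {
  qcarrier :> Type;
  qop : qcarrier -> qcarrier -> qcarrier;
  qopinv : qcarrier -> qcarrier -> qcarrier;
  qidem : forall x, qop x x = x;
  qinvl : forall x y, qopinv (qop x y) y = x;
  qinvr : forall x y, qop (qopinv x y) y = x;
  qdistr : forall x y z, qop (qop x y) z = qop (qop x z) (qop y z)
}.

Definition involutory (Q : quandle) : Prop :=
  forall x y : Q, qop (qop x y) y = x.

Definition quandle_hom (Q X : quandle) (f : Q -> X) : Prop :=
  forall x y : Q, f (qop x y) = qop (f x) (f y).

Definition S (Q : quandle) (x : Q) : Q -> Q := fun y => qop y x.
Definition Sinv (Q : quandle) (x : Q) : Q -> Q := fun y => qopinv y x.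

(* Inn(Q): the subgroup of Aut(Q) generated by all S_x, i.e. all finite
   products of the S_x and their inverses (as maps Q -> Q). *)
Inductive inn_elt (Q : quandle) : (Q -> Q) -> Prop :=
  | inn_id : inn_elt (fun y => y)
  | inn_S (x : Q) (g : Q -> Q) : inn_elt g -> inn_elt (S x \o g)
  | inn_Sinv (x : Q) (g : Q -> Q) : inn_elt g -> inn_elt (Sinv x \o g).

(* Trans(Q): subgroup generated by all S_x S_y^{-1}, i.e. finite products of
   the S_x S_y^{-1} and their inverses S_y S_x^{-1}. *)
Inductive trans_elt (Q : quandle) : (Q -> Q) -> Prop :=
  | trans_id : trans_elt (fun y => y)
  | trans_gen (x y : Q) (g : Q -> Q) :
      trans_elt g -> trans_elt (S x \o Sinv y \o g)
  | trans_geninv (x y : Q) (g : Q -> Q) :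
      trans_elt g -> trans_elt (S y \o Sinv x \o g).

(* The subgroup {f | P f} of the permutation group of Q (group law =
   composition, equality = pointwise) is isomorphic to the finite group G. *)
Definition perm_subgroup_isog (Q : quandle) (P : (Q -> Q) -> Prop)
    (gT : finGroupType) : Prop :=
  exists phi : gT -> (Q -> Q),
    [/\ forall g, P (phi g),
        forall g h, phi (g * h)%g =1 phi g \o phi h,
        forall g h, phi g =1 phi h -> g = h
      & forall f, P f -> exists g, phi g =1 f].

(* The diagram of T_{2,q} u A used: T_{2,q} is the closure of the
   2-braid sigma_1^q, A is the braid axis (a ring around the two strands).
   Arcs: strand arcs c_0, ..., c_{q+1} and axis arcs r, r'.  Crossings:
     braid:   c_{j+2} = c_j |> c_{j+1}    (0 <= j < q)
     ring (front, strands under r):  c_0 = c_q |> r,  c_1 = c_{q+1} |> r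
     ring (back, ring under strands): r' = r |> c_q,  r = r' |> c_{q+1}. *)
Definition T2qA_rels (q : nat) (X : quandle) (c : nat -> X) (r r' : X) : Prop :=
  [/\ forall j, j < q -> c j.+2 = qop (c j) (c j.+1),
      c 0 = qop (c q) r,
      c 1 = qop (c q.+1) r,
      r' = qop r (c q)
    & r = qop r' (c q.+1)].

(* (Q, c, r, r') is the involutory quandle Q_2(T_{2,q} u A): the involutory
   quandle presented by the generators c_0..c_{q+1}, r, r' and the above
   relations, characterized by its universal property. *)
Definition is_Q2_T2qA (q : nat) (Q : quandle) (c : nat -> Q) (r r' : Q) : Prop :=
  [/\ involutory Q,
      T2qA_rels q c r r'
    & forall (X : quandle) (d : nat -> X) (s s' : X),
        involutory X -> T2qA_rels q d s s' ->
        (exists f : Q -> X,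
           [/\ quandle_hom f, forall j, j < q.+2 -> f (c j) = d j,
               f r = s & f r' = s'])
        /\ (forall f g : Q -> X,
              quandle_hom f -> quandle_hom g ->
              (forall j, j < q.+2 -> f (c j) = g (c j)) ->
              f r = g r -> f r' = g r' -> f =1 g)].

From mathcomp Require Import all_boot all_fingroup all_solvable all_algebra.
From mathcomp Require Import ring zify.
From Stdlib Require Import FunctionalExtensionality.
Set Implicit Arguments. Unset Strict Implicit. Unset Printing Implicit Defensive.
Import GRing.Theory.

(** Q_2(T_{2,q} u A) is isomorphic to the involutory quandle on Z/2q + {r, r'} with
    a |> b = 2b - a, a |> r = a |> r' = a + q, r |> a = r', r' |> a = r, and r, r' fixing
    each other: the braid crossings make the strand arcs a dihedral sequence, the axis acts
    on it as the half turn a |-> a + q (so the sequence is 2q-periodic), and every arc acts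
    on the axis in the same way.  In this model each point symmetry is a motion a |-> +-a + t
    of Z/2q, exchanging r and r' exactly when the sign is -, with t even for the S_a and
    t = q for S_r and S_r'.  Hence Inn is generated by a |-> -a and the rotation by
    gcd(2, q), a dihedral group of order 2 * 2q/gcd(2, q), while Trans consists of the
    motions with t = q [sign is -] mod 2, generated by the rotation by 2 and a |-> q - a,
    a dihedral group of order 2q. *)

Section InnTransClosure.
Variable Q : quandle.

Lemma inn_elt_comp (f g : Q -> Q) : inn_elt f -> inn_elt g -> inn_elt (f \o g).
Proof.
move=> inn_f inn_g; elim: inn_f => [|x f' _ IH|x f' _ IH]; first exact: inn_g.
- exact: inn_S x _ IH.
- exact: inn_Sinv x _ IH.
Qed.

Lemma trans_elt_comp (f g : Q -> Q) :
  trans_elt f -> trans_elt g -> trans_elt (f \o g).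
Proof.
move=> trans_f trans_g; elim: trans_f => [|x y f' _ IH|x y f' _ IH].
- exact: trans_g.
- exact: trans_gen x y _ IH.
- exact: trans_geninv x y _ IH.
Qed.

Lemma inn_elt_S (x : Q) : inn_elt (S x).
Proof. exact: inn_S x _ (inn_id Q). Qed.

Lemma trans_elt_SSinv (x y : Q) : trans_elt (S x \o Sinv y).
Proof. exact: trans_gen x y _ (trans_id Q). Qed.

End InnTransClosure.

Lemma comp_closed_iter (T : Type) (P : (T -> T) -> Prop) (R F : T -> T) :
  P (fun z => z) -> (forall f g, P f -> P g -> P (f \o g)) -> P R -> P F ->
  forall i j, P (fun z => iter i R (iter j F z)).
Proof.
move=> P_id P_comp P_R P_F; elim=> [|i IH] j; last exact: P_comp P_R (IH j).
by elim: j => [|j IH] //; apply: P_comp P_F IH.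
Qed.

Section Conjugation.
Variables (A B : quandle) (f : A -> B) (g : B -> A).
Hypotheses (f_hom : quandle_hom f) (gK : cancel g f).

Lemma quandle_hom_opinv x y : f (qopinv x y) = qopinv (f x) (f y).
Proof. by rewrite -{2}(qinvr x y) f_hom qinvl. Qed.

Lemma inn_elt_conj h : inn_elt h -> inn_elt (f \o h \o g).
Proof.
elim=> [|x h' _ IH|x h' _ IH].
- have -> : f \o (fun y => y) \o g = (fun y => y).
    by apply: functional_extensionality => z /=; rewrite gK.
  exact: inn_id.
- have -> : f \o (S x \o h') \o g = S (f x) \o (f \o h' \o g).
    by apply: functional_extensionality => z /=; rewrite /S f_hom.
  exact: inn_S.
- have -> : f \o (Sinv x \o h') \o g = Sinv (f x) \o (f \o h' \o g).
    by apply: functional_extensionality => z /=; rewrite /Sinv quandle_hom_opinv.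
  exact: inn_Sinv.
Qed.

Lemma trans_elt_conj h : trans_elt h -> trans_elt (f \o h \o g).
Proof.
elim=> [|x y h' _ IH|x y h' _ IH].
- have -> : f \o (fun y => y) \o g = (fun y => y).
    by apply: functional_extensionality => z /=; rewrite gK.
  exact: trans_id.
- have -> : f \o (S x \o Sinv y \o h') \o g = S (f x) \o Sinv (f y) \o (f \o h' \o g).
    by apply: functional_extensionality => z /=; rewrite /S /Sinv f_hom quandle_hom_opinv.
  exact: trans_gen.
- have -> : f \o (S y \o Sinv x \o h') \o g = S (f y) \o Sinv (f x) \o (f \o h' \o g).
    by apply: functional_extensionality => z /=; rewrite /S /Sinv f_hom quandle_hom_opinv.
  exact: trans_geninv.
Qed.

End Conjugation.

Lemma perm_subgroup_isog_conj (A B : quandle) (f : A -> B) (g : B -> A)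
    (PA : (A -> A) -> Prop) (PB : (B -> B) -> Prop) (gT : finGroupType) :
  cancel f g -> cancel g f ->
  (forall h, PB h -> PA (g \o h \o f)) -> (forall h, PA h -> PB (f \o h \o g)) ->
  perm_subgroup_isog PB gT -> perm_subgroup_isog PA gT.
Proof.
move=> fK gK PBA PAB [phi [phiP phiM phi_inj phi_onto]].
exists (fun x => g \o phi x \o f); split.
- by move=> x; apply: PBA.
- by move=> x y z /=; rewrite gK phiM.
- move=> x y E; apply: phi_inj => w.
  by have := congr1 f (E (g w)); rewrite /= !gK.
- move=> h /PAB /phi_onto [x phi_x]; exists x => z /=.
  by rewrite phi_x /= !fK.
Qed.

Lemma dihedral_normal_form n : 1 < n ->
  exists x y : 'D_(2 * n), [/\ x ^+ n = 1, y ^+ 2 = 1,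
    forall i (b : bool) k (c : bool),
      x ^+ i * y ^+ b * (x ^+ k * y ^+ c) =
      x ^+ (i + k * (if b then n.-1 else 1%N)) * y ^+ (b (+) c)
  & bijective (fun p : 'I_n * bool => x ^+ p.1 * y ^+ p.2)]%g.
Proof.
move=> n_gt1; have := isoGrp_hom (Grp_dihedral n_gt1); rewrite -mul2n.
case/existsP=> -[x y] /= /eqP[genD xn y2 xy]; exists x, y.
have yx k : (y * x ^+ k = x ^+ (k * n.-1) * y)%g.
  have xV : (x^-1 = x ^+ n.-1)%g.
    by apply: mulg1_eq; rewrite -expgS prednK ?xn ?(ltnW n_gt1).
  have yV : (y^-1 = y)%g by apply: mulg1_eq; rewrite -y2 expgS expg1.
  by rewrite conjgCV yV conjXg xy xV -expgM [n.-1 * k]mulnC.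
split=> // [i [] k c|].
- rewrite expg1 mulgA -(mulgA _ y) yx mulgA -expgD -mulgA -expgS.
  by case: c => //=; rewrite y2.
- by rewrite expg0 mulg1 mulgA -expgD muln1.
set e := fun p => _.
have e_onto (g : 'D_(2 * n)) : g \in codom e.
  have : (g \in <[x]> <*> <[y]>)%g by rewrite genD inE.
  rewrite norm_joinEr ?norms_cycle ?xy ?groupV ?cycle_id //.
  case/mulsgP=> _ _ /cycleP[a ->] /cycleP[b ->] ->.
  apply/codomP; exists (Ordinal (ltn_pmod a (ltnW n_gt1)), odd b).
  by rewrite /e /= -modn2 !expg_mod.
have card_e : #|{: 'I_n * bool}| = #|'D_(2 * n)|.
  rewrite card_prod card_ord card_bool.
  by have := card_dihedral n_gt1; rewrite cardsT -mul2n => ->; apply: mulnC.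
apply: (@inj_card_bij _ _ e); last by rewrite card_e.
apply: in2T; apply/image_injP; rewrite card_e; apply/eqP/eq_card => g.
by apply/idP/idP => // _; apply: e_onto.
Qed.

Lemma iter_mod (T : Type) (n : nat) (f : T -> T) :
  (forall z, iter n f z = z) -> forall a z, iter (a %% n) f z = iter a f z.
Proof.
move=> fn a z; rewrite {2}(divn_eq a n) iterD.
by elim: (a %/ n) => [|k IH] //=; rewrite mulSn iterD fn -IH.
Qed.

Section DihedralRealization.
Variables (n : nat) (T : quandle) (R F : T -> T).
Hypotheses (n_gt1 : 1 < n) (Rn : forall z, iter n R z = z)
  (FF : forall z, F (F z) = z) (FR : forall z, F (R z) = iter n.-1 R (F z)).

Local Notation word i b := (fun z => iter i R (iter b F z)).

Hypothesis word_inj : forall i k (b c : bool),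
  i < n -> k < n -> word i b =1 word k c -> i = k /\ b = c.

Lemma word_mod i (b : bool) : word (i %% n) b =1 word i b.
Proof. by move=> z; apply: iter_mod. Qed.

Lemma F_iterR k z : F (iter k R z) = iter (k * n.-1) R (F z).
Proof. by elim: k z => [|k IH] z //=; rewrite FR IH mulSn iterD. Qed.

Lemma word_comp i (b : bool) k (c : bool) :
  word i b \o word k c =1 word (i + k * (if b then n.-1 else 1)) (b (+) c).
Proof.
move=> z /=; rewrite iterD; case: b => /=; last by rewrite muln1.
by rewrite F_iterR; case: c => //=; rewrite FF.
Qed.

Lemma dihedral_realization (P : (T -> T) -> Prop) :
  (forall i (b : bool), P (word i b)) ->
  (forall f, P f -> exists i (b : bool), f =1 word i b) ->
  perm_subgroup_isog P 'D_(2 * n).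
Proof.
move=> P_word P_onto.
have [x [y [xn y2 mulxy [coord eK Ke]]]] := dihedral_normal_form n_gt1.
pose phi g := word (coord g).1 (coord g).2.
have phi_xy i (b : bool) : phi (x ^+ i * y ^+ b)%g =1 word i b.
  have := eK (Ordinal (ltn_pmod i (ltnW n_gt1)), b).
  by rewrite /= expg_mod // /phi => ->; apply: word_mod.
exists phi; split.
- by move=> g; apply: P_word.
- move=> g h z; rewrite -[g]Ke -[h]Ke.
  move: (coord g) (coord h) => [i b] [k c] /=.
  by rewrite mulxy !phi_xy -word_comp.
- move=> g h phi_gh; rewrite -[g]Ke -[h]Ke.
  by have [/val_inj -> ->] := word_inj (ltn_ord _) (ltn_ord _) phi_gh.
- move=> f /P_onto [i [b f_ib]]; exists (x ^+ i * y ^+ b)%g => z.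
  by rewrite phi_xy f_ib.
Qed.

End DihedralRealization.

Section ReflectionSequence.
Local Open Scope ring_scope.
Variables (V : comPzRingType) (Q : quandle) (E : V -> Q).
Hypotheses (Qinv : involutory Q)
  (E_rec : forall k, E (k + 2%:R) = qop (E k) (E (k + 1))).

Lemma seq_reflect (d : nat) b : qop (E (b + d%:R)) (E b) = E (b - d%:R).
Proof.
have E_back k : E k = qop (E (k + 2%:R)) (E (k + 1)) by rewrite E_rec Qinv.
elim/ltn_ind: d b => -[|[|d]] IH b.
- by rewrite !addr0 subr0 qidem.
- by rewrite [in RHS](E_back (b - 1)) subrK; congr (qop (E _) _); ring.
- have -> : b + d.+2%:R = b + d%:R + 2%:R by ring.
  rewrite E_rec qdistr.
  have -> : b + d%:R + 1 = b + d.+1%:R by ring.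
  by rewrite !IH // (E_back (b - d.+2%:R)); congr (qop (E _) (E _)); ring.
Qed.

End ReflectionSequence.

Section Model.
Variable q : nat.
Local Open Scope ring_scope.
Local Notation Z := 'Z_(2 * q).

Lemma natr_2q : (2 * q)%:R = 0 :> Z.
Proof. by case: q => [|q'] //; rewrite pchar_Zp // mul2n doubleS. Qed.

Definition half_turn : Z := q%:R.

Lemma half_turn_add : half_turn + half_turn = 0.
Proof. by rewrite -natrD addnn -mul2n natr_2q. Qed.

Lemma opp_half_turn : - half_turn = half_turn.
Proof. by apply/eqP; rewrite eq_sym -subr_eq0 opprK half_turn_add. Qed.

Definition model_op (x y : Z + bool) : Z + bool :=
  match x, y with
  | inl a, inl b => inl (b *+ 2 - a)
  | inl a, inr _ => inl (a + half_turn)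
  | inr s, inl _ => inr (~~ s)
  | inr s, inr _ => inr s
  end.

Lemma model_idem x : model_op x x = x.
Proof. by case: x => [a|s] //=; congr inl; ring. Qed.

Lemma model_invol x y : model_op (model_op x y) y = x.
Proof.
case: x => [a|s]; case: y => [b|t] //=; try congr inl.
- ring.
- by rewrite -addrA half_turn_add addr0.
- by rewrite negbK.
Qed.

Lemma model_distr x y z :
  model_op (model_op x y) z = model_op (model_op x z) (model_op y z).
Proof.
case: x => [a|s]; case: y => [b|t]; case: z => [c|u] //=; congr inl; try ring.
by rewrite opprD opp_half_turn; ring.
Qed.

Definition model : quandle :=
  @Quandle (Z + bool)%type model_op model_op
    model_idem model_invol model_invol model_distr.

Lemma model_involutory : involutory model.
Proof. exact: model_invol. Qed.

Definition model_arc (j : nat) : model := inl j%:R.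

Lemma model_rels : T2qA_rels q model_arc (inr false) (inr true).
Proof.
split=> // [j _||]; rewrite /model_arc /=; congr inl.
- by ring.
- by rewrite half_turn_add.
- by rewrite -[q.+1]addn1 natrD addrAC half_turn_add add0r.
Qed.

Definition motion (b : bool) (t : Z) (x : model) : model :=
  match x with
  | inl a => inl ((-1) ^+ b * a + t)
  | inr s => inr (s (+) b)
  end.

Lemma motion_comp b t c u x :
  motion b t (motion c u x) = motion (b (+) c) ((-1) ^+ b * u + t) x.
Proof.
case: x => [a|s] /=; first by rewrite signr_addb; congr inl; ring.
by rewrite [b (+) c]addbC addbA.
Qed.

Lemma motion0 : motion false 0 =1 id.
Proof. by case=> [a|s] /=; rewrite ?mul1r ?addr0 ?addbF. Qed.

Lemma motion_inj b t c u : motion b t =1 motion c u -> b = c /\ t = u.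
Proof.
move=> eq_m; have := eq_m (inr false); have := eq_m (inl 0) => /=.
by rewrite !mulr0 !add0r => -[->] [->].
Qed.

Lemma S_inl a : S (inl a : model) =1 motion true (a *+ 2).
Proof. by case=> [b|s] /=; [congr inl; ring | rewrite addbT]. Qed.

Lemma S_inr s : S (inr s : model) =1 motion false half_turn.
Proof. by case=> [b|t] /=; rewrite ?mul1r ?addbF. Qed.

Lemma rotation2_SS : motion false 2%:R = S (inl 1 : model) \o S (inl 0 : model).
Proof.
apply: functional_extensionality => x.
by rewrite /comp !S_inl motion_comp; congr motion; ring.
Qed.

Lemma reflection_half_SS :
  motion true half_turn = S (inr false : model) \o S (inl 0 : model).
Proof.
apply: functional_extensionality => x.
by rewrite /comp S_inr S_inl motion_comp; congr motion; ring.
Qed.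

Lemma iter_motion i t : iter i (motion false t) =1 motion false (t *+ i).
Proof.
elim: i => [|i IH] x /=; first by rewrite motion0.
by rewrite IH motion_comp mul1r addrC -mulrS.
Qed.

Lemma motion_word u v i (b : bool) :
  (fun x => iter i (motion false u) (iter b (motion true v) x)) =1
  motion b (v *+ b + u *+ i).
Proof.
move=> x; rewrite iter_motion; case: b => /=; last by rewrite add0r.
by rewrite motion_comp mul1r.
Qed.

End Model.

Section ModelGroups.
Variable q : nat.
Hypothesis q_gt1 : 1 < q.
Local Open Scope ring_scope.
Local Notation Z := 'Z_(2 * q).
Local Notation X := (model q).

Lemma natmul_inj (m n i k : nat) : (m * n = 2 * q)%N -> (i < n)%N -> (k < n)%N ->
  m%:R *+ i = m%:R *+ k :> Z -> i = k.
Proof.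
move=> mn i_lt k_lt; have m_gt0 : (0 < m)%N by case: m mn => //; lia.
have q2_gt1 : (1 < 2 * q)%N by lia.
rewrite -!mulrnA => /(congr1 (@nat_of_ord _)).
rewrite !val_Zp_nat // !modn_small -?mn ?ltn_pmul2l //.
by move/eqP; rewrite eqn_pmul2l // => /eqP.
Qed.

Lemma model_realization (n : nat) (u v : Z) (P : (X -> X) -> Prop) :
  (1 < n)%N -> u *+ n = 0 ->
  (forall i k, (i < n)%N -> (k < n)%N -> u *+ i = u *+ k -> i = k) ->
  (forall i j, P (fun x => iter i (motion false u) (iter j (motion true v) x))) ->
  (forall f, P f -> exists (a : Z) (b : bool), f =1 motion b (v *+ b + a * u)) ->
  perm_subgroup_isog P 'D_(2 * n).
Proof.
move=> n_gt1 un u_inj P_word P_motion.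
have un1 : u *+ n.-1 = - u.
  by apply/eqP; rewrite -subr_eq0 opprK -mulrSr prednK ?un // ltnW.
apply: (dihedral_realization (R := motion false u) (F := motion true v)) => //.
- by move=> x; rewrite iter_motion un motion0.
- by move=> x; rewrite motion_comp mulN1r addNr motion0.
- by move=> x; rewrite iter_motion !motion_comp mulN1r un1 mul1r addrC.
- move=> i k b c i_lt k_lt eq_words.
  have /motion_inj[<- /addrI/u_inj-> //] :
      motion b (v *+ b + u *+ i) =1 motion c (v *+ c + u *+ k).
    by move=> x; rewrite -!motion_word; apply: eq_words.
- move=> f /P_motion [a [b f_ab]]; exists (val a), b => x.
  by rewrite motion_word f_ab -[in a * u](natr_Zp a) mulr_natl.
Qed.

(* [w] is the parity of the number of point symmetries composed. *)
Definition trans_class (w : bool) (f : X -> X) :=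
  exists (a : Z) (b : bool), f =1 motion b (half_turn q *+ (b (+) w) + a *+ 2).

Lemma half_turn_addb (x y : bool) :
  half_turn q *+ x + half_turn q *+ y = half_turn q *+ (x (+) y).
Proof. by case: x; case: y; rewrite /= ?addr0 ?add0r ?half_turn_add. Qed.

Lemma signr_half_turn (b x : bool) : (-1) ^+ b * (half_turn q *+ x) = half_turn q *+ x.
Proof. by case: b; rewrite ?mul1r // mulN1r -mulNrn opp_half_turn. Qed.

Lemma trans_class_comp w w' f g :
  trans_class w f -> trans_class w' g -> trans_class (w (+) w') (f \o g).
Proof.
move=> [a [b f_ab]] [a' [b' g_ab]]; exists ((-1) ^+ b * a' + a), (b (+) b') => x /=.
rewrite g_ab f_ab motion_comp mulrDr signr_half_turn; congr motion.
by rewrite -!half_turn_addb; ring.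
Qed.

Lemma S_trans_class (x : X) : trans_class true (S x).
Proof.
case: x => [a|s].
- by exists a, true; rewrite add0r; apply: S_inl.
- by exists 0, false; rewrite mul0rn addr0; apply: S_inr.
Qed.

Lemma trans_elt_class f : trans_elt f -> trans_class false f.
Proof.
elim=> [|x y g _ IH|x y g _ IH].
- by exists 0, false => x; rewrite mul0rn !addr0 motion0.
- exact: trans_class_comp (trans_class_comp (S_trans_class x) (S_trans_class y)) IH.
- exact: trans_class_comp (trans_class_comp (S_trans_class y) (S_trans_class x)) IH.
Qed.

Lemma model_Trans : perm_subgroup_isog (@trans_elt X) 'D_(2 * q).
Proof.
apply: (@model_realization q 2%:R (half_turn q)) => //.
- by rewrite -mulrnA natr_2q.
- by move=> i k; apply: natmul_inj.
- apply: comp_closed_iter; [exact: trans_id | exact: trans_elt_comp | |].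
  + by rewrite rotation2_SS; apply: trans_elt_SSinv.
  + by rewrite reflection_half_SS; apply: trans_elt_SSinv.
- move=> f /trans_elt_class [a [b f_ab]]; exists a, b => x.
  by rewrite f_ab addbF mulr_natr.
Qed.

Definition inn_class (u : Z) (f : X -> X) :=
  exists (a : Z) (b : bool), f =1 motion b (a * u).

Lemma inn_class_comp u f g : inn_class u f -> inn_class u g -> inn_class u (f \o g).
Proof.
move=> [a [b f_ab]] [a' [b' g_ab]]; exists ((-1) ^+ b * a' + a), (b (+) b') => x /=.
by rewrite g_ab f_ab motion_comp; congr motion; ring.
Qed.

Local Notation g2q := (gcdn 2 q).

Lemma S_inn_class (x : X) : inn_class g2q%:R (S x).
Proof.
case: x => [a|s].
- exists (a * (2 %/ g2q)%:R), true => x; rewrite S_inl -mulrA -natrM divnK ?dvdn_gcdl //.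
  by rewrite mulr_natr.
- by exists (q %/ g2q)%:R, false => x; rewrite S_inr -natrM divnK ?dvdn_gcdr.
Qed.

Lemma inn_elt_class f : inn_elt f -> inn_class g2q%:R f.
Proof.
elim=> [|x g _ IH|x g _ IH].
- by exists 0, false => x; rewrite mul0r motion0.
- exact: inn_class_comp (S_inn_class x) IH.
- exact: inn_class_comp (S_inn_class x) IH.
Qed.

Lemma gcd2_combination : exists i j, g2q%:R = 2%:R *+ i + half_turn q *+ j :> Z.
Proof.
have [j _ /dvdnP[i gcdE]] := Bezoutl q (isT : (0 < 2)%N).
exists i, j; rewrite -opp_half_turn mulNrn /half_turn -!mulrnA.
by rewrite [(2 * i)%N]mulnC [(q * j)%N]mulnC -gcdE natrD addrK.
Qed.

Lemma inn_elt_rotation : inn_elt (motion false (g2q%:R : Z)).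
Proof.
have [i [j ->]] := gcd2_combination.
have -> : motion false (2%:R *+ i + half_turn q *+ j) =
          (fun x => iter i (motion false (2%:R : Z)) (iter j (S (inr false : X)) x)).
  apply: functional_extensionality => x.
  by rewrite (eq_iter (S_inr false)) !iter_motion motion_comp mul1r addrC.
apply: (comp_closed_iter (@inn_id X) (@inn_elt_comp X)); last exact: inn_elt_S.
by rewrite rotation2_SS; apply: inn_elt_comp; apply: inn_elt_S.
Qed.

Lemma model_Inn : perm_subgroup_isog (@inn_elt X) 'D_(2 * (2 * q %/ g2q)).
Proof.
have g2q_gt0 : (0 < g2q)%N by rewrite gcdn_gt0.
have g2q_n : (g2q * (2 * q %/ g2q) = 2 * q)%N.
  by rewrite mulnC divnK ?dvdn_mulr ?dvdn_gcdl.
apply: (@model_realization _ g2q%:R 0).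
- have : (g2q <= 2)%N by rewrite dvdn_leq ?dvdn_gcdl.
  by rewrite ltn_divRL ?dvdn_mulr ?dvdn_gcdl //; lia.
- by rewrite -mulrnA g2q_n natr_2q.
- by move=> i k; apply: natmul_inj.
- apply: comp_closed_iter; [exact: inn_id | exact: inn_elt_comp | |].
    exact: inn_elt_rotation.
  have -> : motion true 0 = S (inl 0 : X).
    by apply: functional_extensionality => x; rewrite S_inl mul0rn.
  exact: inn_elt_S.
- move=> f /inn_elt_class [a [b f_ab]]; exists a, b => x.
  by rewrite f_ab mul0rn add0r.
Qed.

End ModelGroups.

Section Presentation.
Variables (q : nat) (Q : quandle) (c : nat -> Q) (r r' : Q).
Hypotheses (q_gt0 : 0 < q) (Qinv : involutory Q) (rels : T2qA_rels q c r r').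

Fixpoint arc (j : nat) : Q :=
  match j with
  | 0 => c 0
  | 1 => c 1
  | (j'.+1 as k).+1 => qop (arc j') (arc k)
  end.

Lemma arcSS j : arc j.+2 = qop (arc j) (arc j.+1).
Proof. by []. Qed.

Lemma arc_c j : j < q.+2 -> arc j = c j.
Proof.
case: rels => c_rec _ _ _ _.
elim/ltn_ind: j => -[|[|j]] IH j_lt //.
by rewrite arcSS !IH ?c_rec //; lia.
Qed.

Lemma arc_addq j : arc (q + j) = qop (arc j) r.
Proof.
case: rels => _ c0 c1 _ _.
elim/ltn_ind: j => -[|[|j]] IH.
- by rewrite addn0 arc_c //= c0 Qinv.
- by rewrite addn1 arc_c //= c1 Qinv.
- by rewrite !addnS arcSS -!addnS !IH // -qdistr.
Qed.

Lemma arc_add2q j : arc (2 * q + j) = arc j.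
Proof. by rewrite mul2n -addnn -addnA !arc_addq Qinv. Qed.

Lemma arc_mod j : arc (j %% (2 * q)) = arc j.
Proof.
rewrite {2}(divn_eq j (2 * q)); elim: (j %/ (2 * q)) => [|k IH]; first by rewrite add0n.
by rewrite [k.+1 * _]mulSn -addnA arc_add2q.
Qed.

Lemma qop_conj (x y z : Q) : qop x (qop y z) = qop (qop (qop x z) y) z.
Proof. by rewrite qdistr Qinv. Qed.

Lemma arc_rot_shift j z :
  qop (qop z (arc j.+1)) (arc j.+2) = qop (qop z (arc j)) (arc j.+1).
Proof. by rewrite arcSS -qdistr. Qed.

Lemma r_arc_rot j : qop (qop r (arc j)) (arc j.+1) = r.
Proof.
have rot0 i z : qop (qop z (arc i)) (arc i.+1) = qop (qop z (c 0)) (c 1).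
  by elim: i => // i IH; rewrite arc_rot_shift IH.
case: rels => _ _ _ r'E rE.
by rewrite rot0 -(rot0 q) !arc_c // -r'E.
Qed.

Lemma r_arc j : qop r (arc j) = r'.
Proof.
have r_arcS i : qop r (arc i.+1) = qop r (arc i) by rewrite -{1}(r_arc_rot i) Qinv.
have r_arc0 i : qop r (arc i) = qop r (arc 0) by elim: i => // i IH; rewrite r_arcS.
case: rels => _ _ _ r'E _.
by rewrite r_arc0 -(r_arc0 q) arc_c.
Qed.

Lemma r'_arc j : qop r' (arc j) = r.
Proof. by rewrite -(r_arc j) Qinv. Qed.

Lemma r'_r : qop r' r = r'.
Proof. by rewrite -{1}(r_arc q) qdistr qidem -arc_addq r_arc. Qed.

Lemma r_r' : qop r r' = r.
Proof. by rewrite -{1}(r_arc q) qop_conj (r_arc q) r'_r r'_arc. Qed.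

Local Open Scope ring_scope.
Local Notation Z := 'Z_(2 * q).

Definition arcZ (a : Z) : Q := arc a.

Lemma arcZ_nat j : arcZ j%:R = arc j.
Proof. by rewrite /arcZ val_Zp_nat ?arc_mod //; lia. Qed.

Lemma arcZ_rec k : arcZ (k + 2%:R) = qop (arcZ k) (arcZ (k + 1)).
Proof. by rewrite -[k]natr_Zp natr1 -natrD !arcZ_nat addn2. Qed.

Lemma arcZ_op a b : qop (arcZ a) (arcZ b) = arcZ (b *+ 2 - a).
Proof.
have := seq_reflect Qinv arcZ_rec (val (a - b)) b.
by rewrite natr_Zp addrC subrK => ->; congr arcZ; ring.
Qed.

Lemma arcZ_r a : qop (arcZ a) r = arcZ (a + half_turn q).
Proof.
by rewrite -[a in LHS]natr_Zp arcZ_nat -arc_addq -arcZ_nat natrD natr_Zp addrC.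
Qed.

Lemma arcZ_r' a : qop (arcZ a) r' = arcZ (a + half_turn q).
Proof.
rewrite -(r_arc q) -arcZ_nat qop_conj !arcZ_op arcZ_r arcZ_op; congr arcZ.
by rewrite -[in RHS]opp_half_turn; ring.
Qed.

Definition arc_model (x : model q) : Q :=
  match x with inl a => arcZ a | inr b => if b then r' else r end.

Lemma arc_model_hom : quandle_hom arc_model.
Proof.
move=> [a|s] [b|t] /=.
- by rewrite arcZ_op.
- by case: t; rewrite ?arcZ_r ?arcZ_r'.
- by case: s => /=; [exact: esym (r'_arc _) | exact: esym (r_arc _)].
- by case: s; case: t; rewrite ?qidem ?r_r' ?r'_r.
Qed.

Lemma model_iso : is_Q2_T2qA q c r r' ->
  exists (f : Q -> model q) (g : model q -> Q),
    [/\ quandle_hom f, quandle_hom g, cancel f g & cancel g f].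
Proof.
case=> _ _ univ.
have [[f [f_hom f_c f_r f_r']] _] := univ _ _ _ _ (@model_involutory q) (model_rels q).
have [_ hom_unique] := univ _ _ _ _ Qinv rels.
have f_arc j : f (arc j) = inl j%:R.
  elim/ltn_ind: j => -[|[|j]] IH; try exact: f_c.
  by rewrite arcSS f_hom !IH //=; congr inl; ring.
have f_arcZ a : f (arcZ a) = inl a by rewrite /arcZ f_arc natr_Zp.
exists f, arc_model; split=> //.
- exact: arc_model_hom.
- move=> x; apply: (hom_unique (arc_model \o f) id) => //.
  + by move=> y z /=; rewrite f_hom arc_model_hom.
  + by move=> j j_lt /=; rewrite f_c //= arcZ_nat arc_c.
  + by rewrite /= f_r.
  + by rewrite /= f_r'.
- by case=> [a|[]] /=; rewrite ?f_arcZ.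
Qed.

End Presentation.

Theorem mainTheorem4 (q : nat) (Q : quandle) (c : nat -> Q) (r r' : Q) :
  2 < q -> is_Q2_T2qA q c r r' ->
  perm_subgroup_isog (@inn_elt Q) ('D_(2 * (2 * q %/ gcdn 2 q)))%type /\
  perm_subgroup_isog (@trans_elt Q) ('D_(2 * q))%type.
Proof.
move=> q_gt2 Q2; have q_gt1 : 1 < q := ltnW q_gt2.
have [Qinv rels _] := Q2.
have [f [g [f_hom g_hom fK gK]]] := model_iso (ltnW q_gt1) Qinv rels Q2.
split.
- apply: (perm_subgroup_isog_conj fK gK (inn_elt_conj g_hom fK)).
    exact: inn_elt_conj f_hom gK.
  exact: model_Inn q_gt1.
- apply: (perm_subgroup_isog_conj fK gK (trans_elt_conj g_hom fK)).
    exact: trans_elt_conj f_hom gK.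
  exact: model_Trans q_gt1.
Qed.
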